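(* For every connected chordal graph $\hat G$ on $n$ vertices with maximum degree $\Delta$, $\mathrm{OPT}(\hat G)=O(\Delta^2 n\log n)$.
   Context: Let $\hat G=(V,\hat E)$ be a connected unweighted graph with shortest-path metric $\hat\delta$. Let $\widehat{\mathit{NE}}$ be the set of unordered pairs $\{a,b\}$ of distinct vertices with $\{a,b\}\notin\hat E$. For $(u,v)\in V^2$, let $S_{u,v}$ be the set of $\{a,b\}\in\widehat{\mathit{NE}}$ such that $\hat\delta(u,a)+\hat\delta(b,v)+1<\hat\delta(u,v)$ or $\hat\delta(u,b)+\hat\delta(a,v)+1<\hat\delta(u,v)$. Define $\mathrm{OPT}(\hat G)$ as the minimum cardinality of a set $T\subseteq V\times V$ such that $\bigcup_{(u,v)\in T}S_{u,v}=\widehat{\mathit{NE}}$. A graph is chordal if every cycle of length greater than three has a chord. *)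

From mathcomp Require Import all_boot.
Set Implicit Arguments. Unset Strict Implicit. Unset Printing Implicit Defensive.

(* A simple graph on a finite vertex type T: symmetric irreflexive relation e. *)
Section Graph.
Variables (T : finType) (e : rel T).

Definition connected_graph : Prop := forall u v : T, connect e u v.

Fixpoint ball (u : T) (k : nat) : {set T} :=
  match k with
  | 0 => [set u]
  | k'.+1 => ball u k' :|: [set y | [exists x in ball u k', e x y]]
  end.

(* shortest-path distance (correct when the graph is connected) *)
Definition dist (u v : T) : nat :=
  find (fun k => v \in ball u k) (iota 0 #|T|).

Definition is_cycle (c : seq T) : bool := uniq c && cycle e c.

Definition has_chord (c : seq T) : bool :=
  [exists x : T, exists y : T,
     [&& x \in c, y \in c, e x y, y != next c x & x != next c y]].

Definition chordal : Prop :=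
  forall c : seq T, is_cycle c -> 3 < size c -> has_chord c.

Definition max_degree : nat := \max_(v : T) #|[set w | e v w]|.

Definition NE : {set {set T}} :=
  [set P : {set T} | [exists a : T, exists b : T,
     [&& P == [set a; b], a != b & ~~ e a b]]].

Definition S (u v : T) : {set {set T}} :=
  [set P in NE | [exists a : T, exists b : T,
     (P == [set a; b]) &&
     ((dist u a + dist b v + 1 < dist u v) || (dist u b + dist a v + 1 < dist u v))]].

Definition covers (X : {set T * T}) : bool :=
  \bigcup_(p in X) S p.1 p.2 == NE.

Definition OPT : nat := \big[minn/#|T|.+1 ^ 2]_(X : {set T * T} | covers X) #|X|.

End Graph.

From mathcomp Require Import all_boot zify.
From Stdlib Require Import Classical.
Set Implicit Arguments. Unset Strict Implicit. Unset Printing Implicit Defensive.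

(* The construction is a divide and conquer along balanced clique separators.
   1. Chordal graphs have no induced cycle of length at least four.  Hence a
      component [C] of [G - K], for a clique [K], contains a vertex adjacent to
      every vertex of [K] with a neighbour in [C] ([dominating_vertex]), and
      enlarging separators with such vertices gives, for any vertex set [I], a
      clique [K] leaving at most half of [I] in each component of [G - K]
      ([balanced_clique_separator]).
   2. A non-edge [{a, b}] of [I] not inside one component of [G - K] is covered
      by a pair [(u, y)] with [u \in {a, b}] and [y] in the closed neighbourhood
      of [K], which has at most [(D + 1)^2] vertices ([separated_pair_covered],
      [closed_nbhd_card]).
   3. Recursing into the components yields a cover of [I] of size
      [(D + 1)^2 |I| (log |I| + 1)] ([cover_within]), which for [I = V] and
      [n >= 2] is at most [8 D^2 n log n]; for [n <= 1] there is no non-edge. *)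

Lemma classical_ex_minn (P : nat -> Prop) :
  (exists k, P k) -> exists k, P k /\ forall k', k' < k -> ~ P k'.
Proof.
move=> [k Pk]; elim: k {-2}k (leqnn k) Pk => [|n IH] k kn Pk.
  by exists k; split => // k'; lia.
case: (classic (exists k', k' < k /\ P k')) => [[k' [k'k Pk']]|nok].
  by apply: (IH k') => //; lia.
by exists k; split => // k' k'k Pk'; apply: nok; exists k'.
Qed.

Lemma next_mkseq (T : eqType) (f : nat -> T) (L i : nat) :
  {in gtn L &, injective f} -> i < L ->
  next (mkseq f L) (f i) = f (if i < L.-1 then i.+1 else 0).
Proof.
move=> finj iL; have uc : uniq (mkseq f L).
  by rewrite map_inj_in_uniq ?iota_uniq // => x y; rewrite !mem_iota !add0n; apply: finj.
have nthc j : j < L -> nth (f 0) (mkseq f L) j = f j by move=> jL; rewrite nth_mkseq.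
rewrite next_nth -(nthc i iL) mem_nth ?size_mkseq // (index_uniq _ _ uc) ?size_mkseq //.
case: L finj iL {uc nthc} => // L finj iL /=.
case: ltnP => iL'; first by rewrite (nth_map 0) ?size_iota // nth_iota.
by rewrite nth_default // size_map size_iota.
Qed.

Lemma card_bigcup_le (T I : finType) (A : pred I) (F : I -> {set T}) :
  #|\bigcup_(i | A i) F i| <= \sum_(i | A i) #|F i|.
Proof.
elim/big_rec2: _ => [|i x n _ h]; first by rewrite cards0.
by rewrite (leq_trans (leq_card_setU _ _).1) // leq_add2l.
Qed.

Lemma bigmin_le (I : finType) (P : pred I) (F : I -> nat) (x0 : nat) (i : I) :
  P i -> \big[minn/x0]_(j | P j) F j <= F i.
Proof.
move=> Pi; have : i \in index_enum I by rewrite mem_index_enum.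
elim: (index_enum I) => [|a r IH] //; rewrite inE big_cons.
case/orP => [/eqP <-|ir]; first by rewrite Pi geq_minl.
by case: ifP => _; [rewrite (leq_trans (geq_minr _ _)) // IH | exact: IH].
Qed.

Lemma trunc_log_half (j n : nat) : 0 < j -> 2 * j <= n -> (trunc_log 2 j).+1 <= trunc_log 2 n.
Proof. by move=> j0 jn; rewrite -trunc_logMp // leq_trunc_log. Qed.

Lemma halving_recurrence (I : finType) (A : pred I) (w : I -> nat) (c n : nat) :
  (forall i, A i -> 2 * w i <= n) -> \sum_(i | A i) w i <= n ->
  \sum_(i | A i) c * w i * (trunc_log 2 (w i)).+1 <= c * n * trunc_log 2 n.
Proof.
move=> half sum_le; under eq_bigr do rewrite -mulnA.
rewrite -big_distrr -mulnA leq_mul2l; apply/orP; right.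
apply: (@leq_trans (\sum_(i | A i) w i * trunc_log 2 n)).
  apply: leq_sum => i Ai; case: (posnP (w i)) => [->//|wi0].
  by rewrite leq_mul2l trunc_log_half ?half ?orbT.
by rewrite -big_distrl leq_mul2r sum_le orbT.
Qed.

(* Walks are encoded as functions [p : nat -> T] together with a length [m];
   this makes splicing and reindexing of walks plain arithmetic on indices. *)
Section Walks.
Variables (T : finType) (e : rel T).

Definition walk (p : nat -> T) (m : nat) : Prop := forall i, i < m -> e (p i) (p i.+1).

Definition chordless_walk (p : nat -> T) (m : nat) : Prop :=
  walk p m /\ forall i l, i.+1 < l <= m -> ~~ e (p i) (p l).

Lemma walk_prefix (p : nat -> T) (m i : nat) : walk p m -> i <= m -> walk p i.
Proof. by move=> w im j ji; apply: w; lia. Qed.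

Lemma ballP (u v : T) (k : nat) :
  reflect (exists m p, [/\ m <= k, p 0 = u, p m = v & walk p m]) (v \in ball e u k).
Proof.
apply: (iffP idP).
- elim: k v => [|k IH] v /=.
    by rewrite inE => /eqP ->; exists 0, (fun _ => u); split => // i; lia.
  rewrite inE => /orP [/IH [m [p [mk p0 pm w]]]|].
    by exists m, p; split => //; lia.
  rewrite inE => /existsP [x /andP [/IH [m [p [mk p0 pm w]]] exv]].
  exists m.+1, (fun i => if i <= m then p i else v); split => //.
  + by rewrite ltnn.
  + move=> i im /=; case: (ltngtP i m) => [ilt|mi|->].
    * exact: w.
    * lia.
    * by rewrite pm.
- elim: k v => [|k IH] v [m [p [mk p0 pm w]]] /=.
    by rewrite inE -pm (_ : m = 0) ?p0 //; lia.
  rewrite inE; case: (leqP m k) => mk'; first by rewrite IH //; exists m, p.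
  have {mk} m1 : m = k.+1 by lia.
  subst m.
  apply/orP; right; rewrite inE; apply/existsP; exists (p k).
  rewrite IH; last by exists k, p; split => //; apply: walk_prefix w _.
  by rewrite -pm; apply: w; lia.
Qed.

Lemma dist_le (u v : T) (m : nat) (p : nat -> T) :
  p 0 = u -> p m = v -> walk p m -> dist e u v <= m.
Proof.
move=> p0 pm w; have vb : v \in ball e u m by apply/ballP; exists m, p.
rewrite /dist; case: (ltnP m #|T|) => mT.
  by rewrite leqNgt; apply/negP => /(before_find 0); rewrite nth_iota // add0n vb.
by apply: leq_trans mT; rewrite -[X in _ <= X](size_iota 0) find_size.
Qed.

Lemma connect_walk (x y : T) : connect e x y ->
  exists m p, [/\ m < #|T|, p 0 = x, p m = y & walk p m].
Proof.
move=> /connectP [s ps ->]; case: (shortenP ps) => s' ps' us' _.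
exists (size s'), (fun i => nth x (x :: s') i); split => //.
- by move: (card_uniqP us') => /= <-; rewrite max_card.
- by rewrite (last_nth x).
- by move=> i im; move/(pathP x): ps' => /(_ i im).
Qed.

Hypothesis econ : connected_graph e.

Lemma dist_geo (u v : T) :
  exists p, [/\ p 0 = u, p (dist e u v) = v & walk p (dist e u v)].
Proof.
have [m0 [p0 [m0T p0u p0v w0]]] := connect_walk (econ u v).
have hs : has (fun k => v \in ball e u k) (iota 0 #|T|).
  by apply/hasP; exists m0; [rewrite mem_iota | apply/ballP; exists m0, p0].
have dT : dist e u v < #|T| by move: hs; rewrite has_find size_iota.
have := nth_find 0 hs; rewrite -/(dist e u v) nth_iota // add0n.
case/ballP => m [p [md pu pv w]].
have -> : dist e u v = m by have := dist_le pu pv w; lia.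
by exists p.
Qed.

Lemma dist0 (u : T) : dist e u u = 0.
Proof. by apply/eqP; rewrite -leqn0; apply: (@dist_le u u 0 (fun _ => u)) => // i; lia. Qed.

Lemma dist_ge2 (a b : T) : a != b -> ~~ e a b -> 1 < dist e a b.
Proof.
move=> ab nab; have [p [pa pb w]] := dist_geo a b.
case Hd: (dist e a b) => [|[|d]] //; rewrite Hd in pb w.
- by move: ab; rewrite -pa -pb eqxx.
- by move: nab; rewrite -pa -pb w.
Qed.

End Walks.

Section Chordal.
Variables (T : finType) (e : rel T).
Hypotheses (esym : symmetric e) (eirr : irreflexive e) (echord : chordal e).

Lemma no_chordless_cycle (f : nat -> T) (L : nat) : 3 < L ->
  (forall i l, i < l < L -> f i != f l) ->
  (forall i l, i < l < L -> e (f i) (f l) = (l == i.+1) || ((i == 0) && (l == L.-1))) ->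
  False.
Proof.
move=> L3 fneq fe; set c := mkseq f L.
have finj : {in gtn L &, injective f}.
  move=> i l; rewrite !inE => iL lL fil; case: (ltngtP i l) => // h.
  - by move: (fneq i l); rewrite fil eqxx h lL => /(_ isT).
  - by move: (fneq l i); rewrite fil eqxx h iL => /(_ isT).
have memc z : z \in c -> exists2 i, i < L & z = f i.
  by case/mapP => i; rewrite mem_iota add0n => /andP [_ iL] ->; exists i.
have uc : uniq c.
  by rewrite map_inj_in_uniq ?iota_uniq // => x y; rewrite !mem_iota !add0n; apply: finj.
have cyc : cycle e c.
  apply: cycle_from_next => // _ /memc [i iL ->]; rewrite next_mkseq //.
  case: ifP => iL'; first by rewrite fe ?eqxx //; lia.
  by rewrite esym fe; [apply/orP; right; apply/eqP; lia | lia].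
have [x [y /and5P [/memc [i iL ->] /memc [l lL ->] exy]]] :
    exists x y, [&& x \in c, y \in c, e x y, y != next c x & x != next c y].
  have /existsP [x /existsP [y h]] : has_chord e c.
    by apply: echord; rewrite ?size_mkseq // /is_cycle uc cyc.
  by exists x, y.
rewrite !next_mkseq // => /eqP ynx /eqP xny.
have chord i' l' : i' < l' < L -> e (f i') (f l') ->
    f l' = f (if i' < L.-1 then i'.+1 else 0) \/ f i' = f (if l' < L.-1 then l'.+1 else 0).
  move=> il'; rewrite fe // => /orP [/eqP -> | /andP [/eqP -> /eqP ->]].
  - by left; rewrite ifT //; lia.
  - by right; rewrite ltnn.
case: (ltngtP i l) => [il|li|eil]; last by rewrite eil eirr in exy.
- by have := chord i l; rewrite il lL => /(_ isT exy) [h|h]; [apply: ynx | apply: xny].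
- by have := chord l i; rewrite li iL esym => /(_ isT exy) [h|h]; [apply: xny | apply: ynx].
Qed.

(* The core use of chordality: let [p 0, ..., p k] be a chordless walk avoiding
   a set [K] such that [p k] is the first vertex of the walk adjacent to [s \in K].
   Then every [t \in K] adjacent to both [s] and [p 0] is adjacent to [p k];
   otherwise [t], [p j], ..., [p k], [s] (with [p j] the last neighbour of [t]
   on the walk) would be an induced cycle of length at least four. *)
Lemma chordless_walk_apex (K : {set T}) (p : nat -> T) (k : nat) (s t : T) :
  chordless_walk e p k -> (forall i, i <= k -> p i \notin K) -> s \in K -> t \in K ->
  (forall i, i < k -> ~~ e (p i) s) -> e (p k) s -> e t s -> e t (p 0) -> e t (p k).
Proof.
move=> [w ind] pK sK tK ps pks ets etp0.
have sadj i : i <= k -> e (p i) s = (i == k).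
  by move=> ik; case: (ltngtP i k) => [/ps/negbTE||->] //; lia.
have padj i l : i < l <= k -> e (p i) (p l) = (l == i.+1).
  move=> il; case: (eqVneq l i.+1) => [->|li]; first by apply: w; lia.
  by apply/negbTE/ind; lia.
have pinj i l : i < l <= k -> p i != p l.
  move=> il; apply/eqP => pil; have [lk|lk] : l < k \/ l = k by lia.
  - by move: (padj i l.+1); rewrite pil w //; lia.
  - by move: (sadj i); rewrite pil lk pks; lia.
apply/negPn/negP => nkt.
have ex_j : exists j, (j <= k) && e t (p j) by exists 0; rewrite etp0.
have ub_j i : (i <= k) && e t (p i) -> i <= k by case/andP.
case: (ex_maxnP ex_j ub_j) => j /andP [jk tj] jmax.
have tadj i : j <= i <= k -> e t (p i) = (i == j).
  move=> ji; case: (eqVneq i j) => [->//|ij]; apply/negbTE/negP => ti.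
  by have := jmax i; rewrite ti; lia.
have {}jk : j < k by case: (ltngtP j k) tj => // [|->]; [lia | rewrite (negbTE nkt)].
have tp i : i <= k -> t != p i by move=> ik; apply: contraNneq (pK i ik) => <-.
have sp i : i <= k -> s != p i by move=> ik; apply: contraNneq (pK i ik) => <-.
pose f i := if i is i'.+1 then (if i' <= k - j then p (j + i') else s) else t.
apply: (@no_chordless_cycle f (k - j).+3); first lia.
- move=> [|i] [|l] //= il.
  + case: ifP => li; first by apply: tp; lia.
    by apply: contraTneq ets => ->; rewrite eirr.
  + case: ifP => ij; case: ifP => lj; try lia.
    * by apply: pinj; lia.
    * by rewrite eq_sym; apply: sp; lia.
- move=> [|i] [|l] //= il.
  + by case: ifP => lj; [rewrite tadj | rewrite ets]; lia.
  + case: ifP => ij; case: ifP => lj; try lia.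
    * by rewrite padj; lia.
    * by rewrite sadj; lia.
Qed.

End Chordal.

Section Components.
Variables (T : finType) (e : rel T).
Hypothesis esym : symmetric e.

Definition avoid (K : {set T}) : rel T := fun x y => [&& e x y, x \notin K & y \notin K].

Definition component (K : {set T}) (a : T) : {set T} :=
  [set z | (z \notin K) && connect (avoid K) a z].

Definition clique (K : {set T}) : Prop := {in K &, forall x y, x != y -> e x y}.

Definition attach (K C : {set T}) : {set T} := [set k in K | [exists c in C, e c k]].

Lemma avoid_sym (K : {set T}) : symmetric (avoid K).
Proof. by move=> x y; rewrite /avoid esym; case: (x \in K) (y \in K) => -[]. Qed.

Lemma component_notin (K : {set T}) (a z : T) : z \in component K a -> z \notin K.
Proof. by rewrite inE => /andP []. Qed.

Lemma component_self (K : {set T}) (a : T) : a \notin K -> a \in component K a.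
Proof. by move=> aK; rewrite inE aK connect0. Qed.

Lemma component_step (K : {set T}) (a x y : T) :
  x \in component K a -> e x y -> y \notin K -> y \in component K a.
Proof.
rewrite !inE => /andP [xK cax] exy yK; rewrite yK.
by apply: connect_trans cax (connect1 _); rewrite /avoid exy xK yK.
Qed.

Lemma component_connect (K : {set T}) (a x y : T) :
  x \in component K a -> y \in component K a -> connect (avoid K) x y.
Proof.
rewrite !inE => /andP [_ ax] /andP [_ ay].
by apply: connect_trans ay; rewrite (sym_connect_sym (avoid_sym K)).
Qed.

Lemma walk_avoid (K : {set T}) (p : nat -> T) (m : nat) :
  walk e p m -> (forall i, i <= m -> p i \notin K) -> connect (avoid K) (p 0) (p m).
Proof.
elim: m => [|m IH] w pK; first exact: connect0.
apply: connect_trans (IH (walk_prefix w (leqnSn m)) (fun i im => pK i (leqW im))) _.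
by apply: connect1; rewrite /avoid w // !pK.
Qed.

Lemma component_disjoint (K : {set T}) (a b : T) :
  component K a != component K b -> [disjoint component K a & component K b].
Proof.
apply: contraR => /pred0Pn [z /andP [/setIdP [_ az] /setIdP [_ bz]]].
have csym := sym_connect_sym (avoid_sym K).
have ab : connect (avoid K) a b by apply: connect_trans az _; rewrite csym.
apply/eqP/setP => w; rewrite !inE; congr (_ && _); apply/idP/idP => h.
- by apply: connect_trans h; rewrite csym.
- exact: connect_trans ab h.
Qed.

End Components.

Section CliqueSeparators.
Variables (T : finType) (e : rel T).
Hypotheses (esym : symmetric e) (eirr : irreflexive e) (echord : chordal e).

(* From any [x] of a component [C] of the graph minus [K] there is a chordless
   walk inside [C] to a vertex adjacent to a given attachment [s] of [C], whose
   last vertex is the only one adjacent to [s]: take a shortest such walk. *)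
Lemma attachment_path (K : {set T}) (a x s : T) :
  x \in component e K a -> s \in attach e K (component e K a) ->
  exists k p, [/\ p 0 = x, forall i, i <= k -> p i \in component e K a,
    e (p k) s, forall i, i < k -> ~~ e (p i) s & chordless_walk e p k].
Proof.
set C := component e K a => xC /setIdP [sK /exists_inP [c cC ecs]].
pose P k := exists p, [/\ p 0 = x, walk e p k, forall i, i <= k -> p i \in C & e (p k) s].
have [k [[p [p0 w pC pks]] kmin]] : exists k, P k /\ forall k', k' < k -> ~ P k'.
  apply: classical_ex_minn.
  have [m [p [_ p0 pm w]]] := connect_walk (component_connect esym xC cC).
  have pC i : i <= m -> p i \in C.
    elim: i => [|i IH] im; first by rewrite p0.
    by case/and3P: (w i im) => epi _ pK; apply: component_step (IH (ltnW im)) epi pK.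
  by exists m, p; split => // [i im|]; [case/and3P: (w i im) | rewrite pm].
exists k, p; split => // [i ik|]; first apply/negP => h.
  apply: (kmin _ ik); exists p; split => //; first exact: walk_prefix w (ltnW ik).
  by move=> i' i'i; apply: pC; lia.
split => // i l /andP [il lk]; apply/negP => h.
(* Shortcutting the edge [p i -- p l] would give a shorter walk. *)
apply: (kmin (k - (l - i) + 1)); first lia.
exists (fun n => if n <= i then p n else p (n + (l - i) - 1)); split => /=.
- by rewrite p0.
- move=> n nk; case: (ltngtP n i) => [ni|ni|->].
  + by apply: w; lia.
  + by rewrite (_ : n.+1 + (l - i) - 1 = (n + (l - i) - 1).+1); [apply: w|]; lia.
  + by rewrite (_ : i.+1 + (l - i) - 1 = l) //; lia.
- by move=> n nk; case: ifP => _; apply: pC; lia.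
- rewrite ifF; last lia.
  by rewrite (_ : k - (l - i) + 1 + (l - i) - 1 = k) //; lia.
Qed.

(* Every component [C] of a chordal graph minus a clique [K] contains a vertex
   adjacent to all the attachments of [C] in [K]: a vertex of [C] with the most
   neighbours among the attachments misses none, since otherwise the apex of an
   attachment path from it sees strictly more of them. *)
Lemma dominating_vertex (K : {set T}) (a : T) : clique e K -> a \notin K ->
  exists2 x, x \in component e K a & {in attach e K (component e K a), forall t, e x t}.
Proof.
move=> cK aK; set C := component e K a; set N := attach e K C.
pose F x := #|N :&: [set t | e x t]|.
case: (@arg_maxnP _ a (mem C) F (component_self e aK)) => x xC xmax.
case: (boolP [forall t in N, e x t]) => [/forall_inP xN|]; first by exists x.
rewrite negb_forall_in => /existsP [s /andP [sN nxs]].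
have sK : s \in K by case/setIdP: sN.
have [k [p [p0 pC pks ps cw]]] := attachment_path xC sN.
have pK i : i <= k -> p i \notin K by move=> ik; apply: component_notin (pC i ik).
have gain : N :&: [set t | e x t] \proper N :&: [set t | e (p k) t].
  apply/properP; split.
  - apply/subsetP => t /setIP [tN]; rewrite inE => ext; rewrite in_setI tN inE.
    have tK : t \in K by case/setIdP: tN.
    have ts : t != s by apply: contraNneq nxs => <-.
    rewrite esym; apply: (chordless_walk_apex esym eirr echord cw pK sK tK ps pks).
    - exact: cK.
    - by rewrite p0 esym.
  - by exists s; rewrite in_setI sN inE ?pks // (negbTE nxs).
by have := leq_trans (proper_card gain) (xmax _ (pC k (leqnn k))); rewrite ltnn.
Qed.

Definition balanced (I K : {set T}) : bool :=
  [forall a, (a \notin K) ==> (2 * #|I :&: component e K a| <= #|I|)].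

(* If the component [C] of [a] is too heavy, replacing [K] by a dominating
   vertex [x] of [C] together with the attachments of [C] yields a clique whose
   heavy components all lie strictly inside [C]. *)
Lemma refine_separator (I K : {set T}) (a : T) :
  clique e K -> a \notin K -> #|I| < 2 * #|I :&: component e K a| ->
  exists2 K', clique e K' & forall a', a' \notin K' ->
    #|I| < 2 * #|I :&: component e K' a'| -> #|component e K' a'| < #|component e K a|.
Proof.
move=> cK aK; set C := component e K a; set N := attach e K C => heavy.
have [x xC xN] := dominating_vertex cK aK.
have NK : N \subset K by apply/subsetP => k /setIdP [].
exists (x |: N).
  move=> u v; rewrite !in_setU1 => /orP [/eqP ->|uN] /orP [/eqP ->|vN]; rewrite ?eqxx //.
  - by move=> _; apply: xN.
  - by move=> _; rewrite esym; apply: xN.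
  - by apply: cK; apply: (subsetP NK).
have stay z y : z \in C -> avoid e (x |: N) z y -> y \in C.
  move=> zC /and3P [ezy _ yK']; apply: (component_step zC ezy); apply: contra yK' => yK.
  by rewrite !inE; apply/orP; right; rewrite yK; apply/exists_inP; exists z.
have clC : closed (avoid e (x |: N)) C.
  by move=> z y ezy; apply/idP/idP => /stay; apply; rewrite // avoid_sym.
move=> a' a'K heavy'; case: (boolP (a' \in C)) => a'C.
  have sub : component e (x |: N) a' \subset C :\ x.
    apply/subsetP => z /setIdP [zK' cz].
    rewrite in_setD1 -(closed_connect clC cz) a'C andbT.
    by apply: contra zK' => /eqP ->; rewrite setU11.
  by rewrite (leq_ltn_trans (subset_leq_card sub)) // (cardsD1 x C) xC.
have disj : [disjoint I :&: component e (x |: N) a' & I :&: C].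
  rewrite -setI_eq0; apply/eqP/setP => z; rewrite !in_setI in_set0.
  apply/negP => /andP [/andP [_ /setIdP [_ cz]] /andP [_ zC]].
  by move: a'C; rewrite (closed_connect clC cz) zC.
have : #|(I :&: component e (x |: N) a') :|: (I :&: C)| <= #|I|.
  by apply: subset_leq_card; rewrite subUset !subsetIl.
by rewrite cardsU (disjoint_setI0 disj) cards0 subn0; lia.
Qed.

Lemma balanced_clique_separator (I : {set T}) : exists2 K, clique e K & balanced I K.
Proof.
suff: forall m K, clique e K -> (forall a, a \notin K ->
    #|I| < 2 * #|I :&: component e K a| -> #|component e K a| <= m) ->
    exists2 K, clique e K & balanced I K.
  by move/(_ #|T| set0); apply=> [x y|a _ _]; rewrite ?inE // max_card.
elim=> [|m IH] K cK hm; (case: (boolP (balanced I K)) => [bal|]; first by exists K);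
  rewrite negb_forall => /existsP [a]; rewrite negb_imply -ltnNge => /andP [aK heavy].
  move: (hm a aK heavy); rewrite leqn0 cards_eq0 => /eqP C0.
  by move: (component_self e aK); rewrite C0 inE.
have [K' cK' hK'] := refine_separator cK aK heavy.
apply: (IH K' cK') => a' a'K heavy'.
by have := hK' a' a'K heavy'; have := hm a aK heavy; lia.
Qed.

End CliqueSeparators.

Section Cover.
Variables (T : finType) (e : rel T).
Hypotheses (esym : symmetric e) (econ : connected_graph e).

Definition closed_nbhd (K : {set T}) : {set T} := [set y | [exists s in K, (s == y) || e s y]].

Definition covered (X : {set T * T}) (P : {set T}) : bool := [exists p in X, P \in S e p.1 p.2].

Definition covers_within (I : {set T}) (X : {set T * T}) : bool :=
  [forall P in NE e, (P \subset I) ==> covered X P].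

Lemma covers_within_mono (I : {set T}) (X Y : {set T * T}) :
  X \subset Y -> covers_within I X -> covers_within I Y.
Proof.
move=> XY /forall_inP cX; apply/forall_inP => P PN; apply/implyP => PI.
case/exists_inP: (implyP (cX P PN) PI) => p pX pS.
by apply/exists_inP; exists p; rewrite ?(subsetP XY).
Qed.

Lemma covers_of_within (X : {set T * T}) : covers_within [set: T] X -> covers e X.
Proof.
move/forall_inP => cX; apply/eqP/setP => P; apply/bigcupP/idP => [[p _]|PN].
  by case/setIdP.
by case/exists_inP: (implyP (cX P PN) (subsetT P)) => p pX pS; exists p.
Qed.

Lemma degree_le (v : T) : #|[set w | e v w]| <= max_degree e.
Proof. exact: (leq_bigmax (F := fun v => #|[set w | e v w]|)). Qed.

(* A clique has at most [max_degree + 1] vertices, each with at most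
   [max_degree + 1] closed neighbours. *)
Lemma closed_nbhd_card (K : {set T}) :
  clique e K -> #|closed_nbhd K| <= (max_degree e).+1 ^ 2.
Proof.
move=> cK; have nbhd_card v : #|v |: [set w | e v w]| <= (max_degree e).+1.
  by rewrite (leq_trans (leq_card_setU _ _).1) // cards1 add1n ltnS degree_le.
have cardK : #|K| <= (max_degree e).+1.
  case: (set_0Vmem K) => [->|[k0 k0K]]; first by rewrite cards0.
  apply: leq_trans (nbhd_card k0); apply: subset_leq_card; apply/subsetP => s sK.
  by rewrite !inE; case: eqVneq => //= sk; apply: cK; rewrite // eq_sym.
have : closed_nbhd K \subset \bigcup_(s in K) (s |: [set w | e s w]).
  apply/subsetP => y; rewrite inE => /exists_inP [s sK sy]; apply/bigcupP; exists s => //.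
  by rewrite !inE eq_sym.
move/subset_leq_card/leq_trans; apply; apply: (leq_trans (card_bigcup_le _ _)).
apply: (@leq_trans (\sum_(s in K) (max_degree e).+1)); first exact: leq_sum.
by rewrite sum_nat_const expnS expn1 leq_mul2r cardK orbT.
Qed.

Lemma NE_intro (a b : T) : a != b -> ~~ e a b -> [set a; b] \in NE e.
Proof.
by move=> ab nab; rewrite inE; apply/existsP; exists a; apply/existsP; exists b; rewrite eqxx ab.
Qed.

Lemma NE_mem (P : {set T}) : P \in NE e -> exists a b, [/\ P = [set a; b], a != b & ~~ e a b].
Proof. by rewrite inE => /existsP [a /existsP [b /and3P [/eqP -> ab nab]]]; exists a, b. Qed.

Lemma S_intro (u v a b : T) : a != b -> ~~ e a b ->
  dist e u a + dist e b v + 1 < dist e u v -> [set a; b] \in S e u v.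
Proof.
move=> ab nab hd; rewrite inE NE_intro //=.
by apply/existsP; exists a; apply/existsP; exists b; rewrite eqxx hd.
Qed.

(* Let [a] and [b] lie in different components of the graph minus [K], with
   [b] at least as close to [K] as [a]. Walking from [b] towards its nearest
   vertex of [K], the last vertex [y] before [K] lies in the closed
   neighbourhood of [K] and is strictly closer to [b] than to [a] by more than
   one, because every geodesic from [a] to [y] has to cross [K]. *)
Lemma nearer_attachment (K : {set T}) (a b sb : T) :
  a \notin K -> b \notin K -> ~~ connect (avoid e K) a b -> sb \in K ->
  (forall s, s \in K -> dist e b sb <= dist e a s) ->
  (forall s, s \in K -> dist e b sb <= dist e b s) ->
  exists2 y, y \in closed_nbhd K & dist e b y + 1 < dist e a y.
Proof.
move=> aK bK nab sbK hab hb; set k := dist e b sb.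
have [r [r0 rk w]] := dist_geo econ b sb; rewrite -/k in rk w.
have k0 : 0 < k by case: k r0 rk {w hab hb} => // r0 rk; move: bK; rewrite -r0 rk sbK.
have rK i : i < k -> r i \notin K.
  move=> ik; apply/negP => riK; have := hb _ riK.
  by have := dist_le r0 (erefl (r i)) (walk_prefix w (ltnW ik)); rewrite -/k; lia.
set y := r k.-1.
have eys : e y sb by rewrite /y -rk; have := w k.-1; rewrite prednK //; apply; lia.
have cby : connect (avoid e K) b y.
  rewrite -r0 /y; apply: walk_avoid; first by apply: walk_prefix w _; lia.
  by move=> i ik; apply: rK; lia.
have dby : dist e b y <= k.-1 by apply: (dist_le r0 (erefl _)); apply: walk_prefix w _; lia.
have [q [q0 qL wq]] := dist_geo econ a y; set L := dist e a y in qL wq *.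
have [j qjK] : exists j : 'I_L.+1, q j \in K.
  apply/existsP; apply: contraNT nab; rewrite negb_exists => /forallP qK.
  apply: (connect_trans (y := y)); last by rewrite (sym_connect_sym (avoid_sym esym K)).
  by rewrite -q0 -qL; apply: walk_avoid => // i iL; apply: (qK (Ordinal _)).
have yK : y \notin K by apply: rK; lia.
have jL : j < L.
  by rewrite ltn_neqAle -ltnS ltn_ord andbT; apply: contraTneq qjK => ->; rewrite qL.
have := dist_le q0 (erefl (q j)) (walk_prefix wq (ltnW jL)); have := hab _ qjK.
exists y; last by lia.
by rewrite inE; apply/exists_inP; exists sb; rewrite // esym eys orbT.
Qed.

Lemma separated_pair_covered (K : {set T}) (a b : T) : a != b -> ~~ e a b ->
  [|| a \in K, b \in K | ~~ connect (avoid e K) a b] ->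
  exists2 u, u \in [set a; b] & exists2 y, y \in closed_nbhd K & [set a; b] \in S e u y.
Proof.
move=> ab nab sep; have ba : b != a by rewrite eq_sym.
have nba : ~~ e b a by rewrite esym.
have inK s : s \in K -> s \in closed_nbhd K.
  by move=> sK; rewrite inE; apply/exists_inP; exists s; rewrite ?eqxx.
have ab_ge2 := dist_ge2 econ ab nab; have ba_ge2 := dist_ge2 econ ba nba.
case: (boolP (a \in K)) => aK.
  exists b; first by rewrite !inE eqxx orbT.
  by exists a; rewrite ?inK // setUC S_intro // !dist0; lia.
case: (boolP (b \in K)) => bK.
  exists a; first by rewrite !inE eqxx.
  by exists b; rewrite ?inK // S_intro // !dist0; lia.
rewrite (negbTE aK) (negbTE bK) /= in sep.
have [s0 s0K] : exists s0, s0 \in K.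
  apply/set0Pn; apply: contraNneq sep => K0.
  have [p [p0 pd w]] := dist_geo econ a b.
  by rewrite -p0 -pd; apply: walk_avoid => // i _; rewrite K0 inE.
case: (@arg_minnP _ s0 (mem K) (dist e a) s0K) => sa saK samin.
case: (@arg_minnP _ s0 (mem K) (dist e b) s0K) => sb sbK sbmin.
case: (leqP (dist e b sb) (dist e a sa)) => hab.
  have [y yK hy] := nearer_attachment aK bK sep sbK
    (fun s sK => leq_trans hab (samin s sK)) sbmin.
  exists a; first by rewrite !inE eqxx.
  by exists y; rewrite // S_intro // dist0.
have sep' : ~~ connect (avoid e K) b a by rewrite (sym_connect_sym (avoid_sym esym K)).
have [y yK hy] := nearer_attachment bK aK sep' saK
  (fun s sK => leq_trans (ltnW hab) (sbmin s sK)) samin.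
exists b; first by rewrite !inE eqxx orbT.
by exists y; rewrite // setUC S_intro // dist0.
Qed.

Definition pieces (I K : {set T}) : {set {set T}} :=
  [set I :&: component e K a | a in I :\: K].

(* The pieces are disjoint subsets of [I]. *)
Lemma sum_card_pieces (I K : {set T}) : \sum_(J in pieces I K) #|J| <= #|I|.
Proof.
have /eqP -> : trivIset (pieces I K).
  apply/trivIsetP => _ _ /imsetP [a1 _ ->] /imsetP [a2 _ ->] neq.
  apply: disjointWl (subsetIr _ _) _; apply: disjointWr (subsetIr _ _) _.
  by apply: (component_disjoint esym); apply: contraNneq neq => ->.
by apply: subset_leq_card; apply/bigcupsP => _ /imsetP [a _ ->]; apply: subsetIl.
Qed.

Lemma covers_within_split (I K : {set T}) (X : {set T * T}) :
  setX I (closed_nbhd K) \subset X ->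
  (forall J, J \in pieces I K -> covers_within J X) -> covers_within I X.
Proof.
move=> sX hJ; apply/forall_inP => P PN; apply/implyP => PI.
have [a [b [Pab ab nab]]] := NE_mem PN; subst P.
have [aI bI] : a \in I /\ b \in I by split; apply: (subsetP PI); rewrite !inE eqxx ?orbT.
case: (boolP [&& a \notin K, b \notin K & connect (avoid e K) a b]) =>
    [/and3P [aK bK cab]|].
  have /hJ /forall_inP /(_ _ PN) /implyP : I :&: component e K a \in pieces I K.
    by apply/imsetP; exists a; rewrite // inE aK aI.
  apply; apply/subsetP => z; rewrite !inE => /orP [] /eqP ->.
  - by rewrite aI aK connect0.
  - by rewrite bI bK cab.
rewrite !negb_and !negbK => sep.
have [u uab [y yK uyS]] := separated_pair_covered ab nab sep.
apply/exists_inP; exists (u, y) => //; apply: (subsetP sX).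
by rewrite in_setX yK andbT; move: uab; rewrite !inE => /orP [] /eqP ->.
Qed.

End Cover.

Section Construction.
Variables (T : finType) (e : rel T).
Hypotheses (esym : symmetric e) (eirr : irreflexive e).
Hypotheses (econ : connected_graph e) (echord : chordal e).

Definition cover_bound (n : nat) : nat := (max_degree e).+1 ^ 2 * n * (trunc_log 2 n).+1.

Lemma cover_within (I : {set T}) :
  exists2 X, covers_within e I X & #|X| <= cover_bound #|I|.
Proof.
have [n ltIn] := ubnP #|I|; elim: n I ltIn => // n IH I ltIn.
have [K cK /forallP bal] := balanced_clique_separator esym eirr echord I.
have half J : J \in pieces e I K -> 2 * #|J| <= #|I|.
  by case/imsetP => a /setDP [_ aK] ->; move: (bal a); rewrite aK.
have nonempty J : J \in pieces e I K -> 0 < #|J|.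
  case/imsetP => a /setDP [aI aK] ->; apply/card_gt0P; exists a.
  by rewrite inE aI component_self.
pose good J X := covers_within e J X && (#|X| <= cover_bound #|J|).
pose XJ J := odflt set0 [pick X | good J X].
have XJgood J : J \in pieces e I K -> good J (XJ J).
  move=> JI; have [X cX hX] : exists2 X, covers_within e J X & #|X| <= cover_bound #|J|.
    by apply: IH; move: (half J JI) (nonempty J JI) ltIn; clear; lia.
  by rewrite /XJ; case: pickP => [//|/(_ X)]; rewrite /good cX hX.
pose X := setX I (closed_nbhd e K) :|: \bigcup_(J in pieces e I K) XJ J.
exists X.
  apply: (covers_within_split esym econ (subsetUl _ _)) => J JI.
  case/andP: (XJgood J JI) => cJ _; apply: covers_within_mono cJ.
  by apply: subset_trans (subsetUr _ _); apply: (bigcup_sup J).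
set c := (max_degree e).+1 ^ 2.
have hN : #|setX I (closed_nbhd e K)| <= #|I| * c.
  by rewrite cardsX leq_mul2l closed_nbhd_card ?orbT.
have hJ : \sum_(J in pieces e I K) #|XJ J| <= c * #|I| * trunc_log 2 #|I|.
  apply: leq_trans (halving_recurrence c half (sum_card_pieces esym I K)).
  by apply: leq_sum => J JI; case/andP: (XJgood J JI).
have := leq_trans (leq_card_setU _ _).1 (leq_add hN (leq_trans (card_bigcup_le _ _) hJ)).
by rewrite /cover_bound -/c mulnS [#|I| * c]mulnC.
Qed.

End Construction.

Section Conclusion.
Variables (T : finType) (e : rel T).

Lemma OPT_le_cover (X : {set T * T}) : covers e X -> OPT e <= #|X|.
Proof. exact: bigmin_le. Qed.

(* With at most one vertex there is no non-edge to cover. *)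
Lemma covers_set0 : #|T| <= 1 -> covers e set0.
Proof.
move=> n1; apply: covers_of_within; apply/forall_inP => P /NE_mem [a [b [_ ab _]]].
by have := max_card [set a; b]; rewrite cards2 ab; lia.
Qed.

(* A connected graph with two vertices has an edge. *)
Lemma max_degree_pos : connected_graph e -> 1 < #|T| -> 0 < max_degree e.
Proof.
move=> econ; case/card_gt1P => u [v [_ _ uv]].
have [m [p [_ p0 pm w]]] := connect_walk (econ u v).
have m0 : 0 < m by case: m pm w => // pm _; move: uv; rewrite -pm p0 eqxx.
apply: leq_trans (degree_le e u); apply/card_gt0P; exists (p 1).
by rewrite inE -p0; apply: w.
Qed.

Lemma cover_bound_le : 0 < max_degree e -> 0 < trunc_log 2 #|T| ->
  cover_bound e #|T| <= 8 * max_degree e ^ 2 * #|T| * trunc_log 2 #|T|.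
Proof.
rewrite /cover_bound; set D := max_degree e; set L := trunc_log 2 #|T| => D1 L1.
have h1 : D.+1 ^ 2 <= 4 * D ^ 2 by rewrite !expnS !expn0; nia.
rewrite (_ : 8 * D ^ 2 * #|T| * L = 4 * D ^ 2 * #|T| * (2 * L)); last by lia.
by apply: leq_mul; [rewrite leq_mul2r h1 orbT | lia].
Qed.

End Conclusion.

Theorem mainTheorem10 :
  exists C : nat, forall (T : finType) (e : rel T),
    symmetric e -> irreflexive e -> connected_graph e -> chordal e ->
    OPT e <= C * (max_degree e) ^ 2 * #|T| * trunc_log 2 #|T|.
Proof.
exists 8 => T e esym eirr econ echord.
case: (leqP #|T| 1) => n1.
  by apply: leq_trans (OPT_le_cover (covers_set0 e n1)) _; rewrite cards0.
have [X cX hX] := cover_within esym eirr econ echord [set: T].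
apply: leq_trans (OPT_le_cover (covers_of_within cX)) _.
rewrite (leq_trans hX) // cardsT cover_bound_le //; first exact: max_degree_pos.
exact: trunc_log_max.
Qed.
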